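(* Let $S,T$ be left semi-braces whose associated maps $r_S$ and $r_T$ are solutions. Let $\sigma:T\to\mathrm{Aut}(S)$ be a homomorphism from $(T,\cdot)$ into the automorphism group of $(S,+,\cdot)$ (${}^ua=\sigma(u)(a)$), $\delta:S\to\mathrm{End}(T,+)$ a map ($u^a=\delta(a)(u)$), and $\mathfrak b:S\times S\to T$ a $\delta$-cocycle satisfying $\mathfrak b(a\,{}^ub,\lambda_a({}^uc))+(uv)^{\lambda_a({}^uc)}+u(\mathfrak b({}^{u^{-1}}(a^{-1}),c)+(u^{-1})^c)=u(\mathfrak b(b,c)+v^c)$ for all $a,b,c\in S$, $u,v\in T$; let $B$ be the asymmetric product $S\times T$ with $(a,u)+(b,v)=(a+b,\mathfrak b(a,b)+u^b+v)$, $(a,u)(b,v)=(a\,{}^ub,uv)$. If for all $a,b\in S$ and $u\in T$: (1) $(u^1)^a=u^a$; (2) $\mathfrak b(1,a)+u=1+u$; (3) $\mathfrak b(a,1+b)=\mathfrak b(a,b)$, (where $1$ denotes the identity of $(S,\cdot)$ when it appears in $S$ and the identity of $(T,\cdot)$ when it appears in $T$), then the map $r_B$ associated to $B$ is a solution.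
   Context: A left semi-brace is a triple $(S,+,\cdot)$ such that $(S,+)$ is a semigroup, $(S,\cdot)$ is a group with identity $1$, and $a(b+c)=ab+a(a^{-1}+c)$ for all $a,b,c$. Set $\lambda_a(b)=a(a^{-1}+b)$, $\rho_b(a)=(a^{-1}+b)^{-1}b$; the map associated to $X$ is $r_X(x,y)=(\lambda_x(y),\rho_y(x))$. A solution is a map $r:X\times X\to X\times X$ with $(r\times\mathrm{id})(\mathrm{id}\times r)(r\times\mathrm{id})=(\mathrm{id}\times r)(r\times\mathrm{id})(\mathrm{id}\times r)$. An automorphism of $(S,+,\cdot)$ is a bijection preserving both operations. A $\delta$-cocycle is a map $\mathfrak b:S\times S\to T$ with $\mathfrak b(a+b,c)+\mathfrak b(a,b)^c+(u^b)^c+v^c=\mathfrak b(a,b+c)+u^{b+c}+\mathfrak b(b,c)+v^c$ for all $a,b,c\in S$, $u,v\in T$. *)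

Definition is_group {S : Type} (mul : S -> S -> S) (one : S) (inv : S -> S) : Prop :=
  (forall a b c, mul (mul a b) c = mul a (mul b c)) /\
  (forall a, mul one a = a) /\ (forall a, mul a one = a) /\
  (forall a, mul (inv a) a = one) /\ (forall a, mul a (inv a) = one).

Definition is_left_semibrace {S : Type} (add mul : S -> S -> S) (one : S)
  (inv : S -> S) : Prop :=
  (forall a b c, add (add a b) c = add a (add b c)) /\
  is_group mul one inv /\
  (forall a b c, mul a (add b c) = add (mul a b) (mul a (add (inv a) c))).

Definition sb_lambda {S : Type} (add mul : S -> S -> S) (inv : S -> S) (a b : S) : S :=
  mul a (add (inv a) b).

Definition sb_rho {S : Type} (add mul : S -> S -> S) (inv : S -> S) (b a : S) : S :=
  mul (inv (add (inv a) b)) b.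

Definition assoc_map {S : Type} (add mul : S -> S -> S) (inv : S -> S) (p : S * S) : S * S :=
  (sb_lambda add mul inv (fst p) (snd p), sb_rho add mul inv (snd p) (fst p)).

Definition r12 {X : Type} (r : X * X -> X * X) (t : X * X * X) : X * X * X :=
  match t with (x, y, z) => let (x', y') := r (x, y) in (x', y', z) end.

Definition r23 {X : Type} (r : X * X -> X * X) (t : X * X * X) : X * X * X :=
  match t with (x, y, z) => let (y', z') := r (y, z) in (x, y', z') end.

Definition is_solution {X : Type} (r : X * X -> X * X) : Prop :=
  forall t : X * X * X, r12 r (r23 r (r12 r t)) = r23 r (r12 r (r23 r t)).

Definition is_automorphism {S : Type} (add mul : S -> S -> S) (f : S -> S) : Prop :=
  (exists g : S -> S, (forall x, g (f x) = x) /\ (forall y, f (g y) = y)) /\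
  (forall a b, f (add a b) = add (f a) (f b)) /\
  (forall a b, f (mul a b) = mul (f a) (f b)).

(* delta-cocycle, with delta c u written u^c *)
Definition is_delta_cocycle {S T : Type} (addS : S -> S -> S) (addT : T -> T -> T)
  (delta : S -> T -> T) (bb : S -> S -> T) : Prop :=
  forall (a b c : S) (u v : T),
    addT (addT (addT (bb (addS a b) c) (delta c (bb a b))) (delta c (delta b u))) (delta c v)
    = addT (addT (addT (bb a (addS b c)) (delta (addS b c) u)) (bb b c)) (delta c v).

Definition ap_add {S T : Type} (addS : S -> S -> S) (addT : T -> T -> T)
  (delta : S -> T -> T) (bb : S -> S -> T) (x y : S * T) : S * T :=
  (addS (fst x) (fst y),
   addT (addT (bb (fst x) (fst y)) (delta (fst y) (snd x))) (snd y)).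

Definition ap_mul {S T : Type} (mulS : S -> S -> S) (mulT : T -> T -> T)
  (sigma : T -> S -> S) (x y : S * T) : S * T :=
  (mulS (fst x) (sigma (snd x) (fst y)), mulT (snd x) (snd y)).

Definition ap_inv {S T : Type} (invS : S -> S) (invT : T -> T)
  (sigma : T -> S -> S) (x : S * T) : S * T :=
  (sigma (invT (snd x)) (invS (fst x)), invT (snd x)).


(* For a left semi-brace S, r_S is a solution exactly when
   1 + x(1 + z) = 1 + xz for all x, z.
   For necessity, the braid relation at (1, y, z) shows that E = {e | 1 + e = e}
   and K = {b | 1 + b = 1} are subgroups of (S, .) with E ∩ K = {1} and
   z = (1 + z) b for some b in K; then 1 + eb = e for e in E and b in K, and the
   identity follows by factoring both z and x(1 + z) in this way.
   The asymmetric product B is a left semi-brace (the cocycle identity gives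
   associativity of +, the compatibility condition gives the semi-brace law),
   and in the identity for B every T-component has the form 1 + t: by (2) the
   cocycle terms vanish and the idempotents 1^c are absorbed by 1, so the
   identity for B reduces to the identities for S and T. *)

Definition braid_condition {X : Type} (add mul : X -> X -> X) (one : X) : Prop :=
  forall x z, add one (mul x (add one z)) = add one (mul x z).

Declare Scope sb_scope.

Section LeftSemibrace.
Context {X : Type} {add mul : X -> X -> X} {one : X} {inv : X -> X}.
Hypothesis HX : is_left_semibrace add mul one inv.

Local Notation "a + b" := (add a b) : sb_scope.
Local Notation "a * b" := (mul a b) : sb_scope.
Local Open Scope sb_scope.
Local Notation lam := (sb_lambda add mul inv).
Local Notation rho := (sb_rho add mul inv).

Lemma sb_addA a b c : (a + b) + c = a + (b + c).
Proof. destruct HX as [H _]. apply H. Qed.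
Lemma sb_mulA a b c : (a * b) * c = a * (b * c).
Proof. destruct HX as [_ [[H _] _]]. apply H. Qed.
Lemma sb_mul1r a : one * a = a.
Proof. destruct HX as [_ [[_ [H _]] _]]. apply H. Qed.
Lemma sb_mulr1 a : a * one = a.
Proof. destruct HX as [_ [[_ [_ [H _]]] _]]. apply H. Qed.
Lemma sb_mulVr a : inv a * a = one.
Proof. destruct HX as [_ [[_ [_ [_ [H _]]]] _]]. apply H. Qed.
Lemma sb_mulrV a : a * inv a = one.
Proof. destruct HX as [_ [[_ [_ [_ [_ H]]]] _]]. apply H. Qed.
Lemma sb_mul_add a b c : a * (b + c) = a * b + a * (inv a + c).
Proof. destruct HX as [_ [_ H]]. apply H. Qed.

Lemma sb_mulrI a b c : a * b = a * c -> b = c.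
Proof.
  intro H. rewrite <- (sb_mul1r b), <- (sb_mul1r c), <- (sb_mulVr a), !sb_mulA, H.
  reflexivity.
Qed.
Lemma sb_mulIr a b c : b * a = c * a -> b = c.
Proof.
  intro H. rewrite <- (sb_mulr1 b), <- (sb_mulr1 c), <- (sb_mulrV a), <- !sb_mulA, H.
  reflexivity.
Qed.
Lemma sb_invr1 : inv one = one.
Proof. rewrite <- (sb_mulr1 (inv one)). apply sb_mulVr. Qed.
Lemma sb_invrK a : inv (inv a) = a.
Proof. apply (sb_mulrI (inv a)). rewrite sb_mulrV, sb_mulVr. reflexivity. Qed.
Lemma sb_invrM a b : inv (a * b) = inv b * inv a.
Proof.
  apply (sb_mulrI (a * b)).
  rewrite sb_mulrV, sb_mulA, <- (sb_mulA b), sb_mulrV, sb_mul1r, sb_mulrV.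
  reflexivity.
Qed.
Lemma sb_inv_eq a b : a * b = one -> b = inv a.
Proof. intro H. apply (sb_mulrI a). rewrite H, sb_mulrV. reflexivity. Qed.
Lemma sb_invr_inj a b : inv a = inv b -> a = b.
Proof. intro H. rewrite <- (sb_invrK a), <- (sb_invrK b), H. reflexivity. Qed.

Lemma sb_add_oneD b c : b + c = b + (one + c).
Proof. pose proof (sb_mul_add one b c) as H. rewrite !sb_mul1r, sb_invr1 in H. exact H. Qed.

Lemma lam_add a b c : lam a (b + c) = lam a b + lam a c.
Proof. unfold sb_lambda. rewrite <- sb_addA, sb_mul_add. reflexivity. Qed.
Lemma lam_mul a b c : lam (a * b) c = lam a (lam b c).
Proof.
  unfold sb_lambda.
  rewrite sb_invrM, sb_mulA, sb_mul_add, <- (sb_mulA b), sb_mulrV, sb_mul1r.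
  reflexivity.
Qed.
Lemma lam1 c : lam one c = one + c.
Proof. unfold sb_lambda. rewrite sb_invr1, sb_mul1r. reflexivity. Qed.
Lemma add_lamE a c : a + c = a * lam (inv a) c.
Proof. unfold sb_lambda. rewrite sb_invrK, <- sb_mulA, sb_mulrV, sb_mul1r. reflexivity. Qed.
Lemma oneD_lam a c : one + lam a c = lam a c.
Proof. rewrite <- lam1, <- lam_mul, sb_mul1r. reflexivity. Qed.
Lemma lam_oneD a c : lam a (one + c) = lam a c.
Proof. rewrite <- lam1, <- lam_mul, sb_mulr1. reflexivity. Qed.
Lemma oneD_idem c : one + (one + c) = one + c.
Proof. pose proof (oneD_lam one c) as H. rewrite lam1 in H. exact H. Qed.
Lemma mul_oneD a z : a * (one + z) = a + lam a z.
Proof. rewrite sb_mul_add, sb_mulr1. reflexivity. Qed.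

Lemma rho_lamE b a : rho b a = inv (lam a b) * (a * b).
Proof.
  unfold sb_rho, sb_lambda.
  rewrite sb_invrM, sb_mulA, <- (sb_mulA (inv a)), sb_mulVr, sb_mul1r.
  reflexivity.
Qed.
Lemma lam_mul_rho a b : lam a b * rho b a = a * b.
Proof. rewrite rho_lamE, <- sb_mulA, sb_mulrV, sb_mul1r. reflexivity. Qed.
Lemma lam_lam_rho a b c : lam a b * lam (rho b a) c = lam a (b * (one + c)).
Proof.
  rewrite (rho_lamE b a), (lam_mul (inv (lam a b))), <- (add_lamE (lam a b)),
    (lam_mul a b c), mul_oneD, lam_add.
  reflexivity.
Qed.
Lemma rho_rho a b c : rho c (rho b a) = inv (lam a (b * (one + c))) * (a * b * c).
Proof.
  rewrite (rho_lamE c (rho b a)), <- lam_lam_rho, sb_invrM, sb_mulA. f_equal.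
  rewrite (rho_lamE b a), !sb_mulA. reflexivity.
Qed.

Lemma fixed_mul e w : one + e = e -> one + w = w -> one + e * w = e * w.
Proof.
  intros He Hw.
  assert (H : e * w = e + lam e w) by (rewrite <- mul_oneD, Hw; reflexivity).
  rewrite H, <- sb_addA, He. reflexivity.
Qed.

Lemma kernel_lam b y : one + b = one -> lam b y = one + b * (one + y).
Proof. intro Hb. rewrite mul_oneD, <- sb_addA, Hb, oneD_lam. reflexivity. Qed.

Lemma braid_of_condition :
  braid_condition add mul one -> is_solution (assoc_map add mul inv).
Proof.
  intros HN [[x y] z]. cbv beta iota zeta delta [r12 r23 assoc_map fst snd].
  set (p := lam y z). set (q := rho z y).
  assert (Hpq : p * q = y * z) by apply lam_mul_rho.
  assert (Hfst : lam (lam x y) (lam (rho y x) z) = lam x p).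
  { rewrite <- lam_mul, lam_mul_rho, lam_mul. reflexivity. }
  assert (Hlst : rho z (rho y x) = rho q (rho p x)).
  { rewrite !rho_rho. f_equal.
    - f_equal. rewrite <- (lam_oneD x (y * _)), <- (lam_oneD x (p * _)), !HN, Hpq.
      reflexivity.
    - rewrite !sb_mulA, Hpq. reflexivity. }
  (* Both braid words multiply out to x y z, so equal outer
     components force equal middle ones. *)
  assert (Hlhs : lam x p * rho (lam (rho y x) z) (lam x y) * rho z (rho y x) = x * (y * z)).
  { rewrite <- Hfst, lam_mul_rho, sb_mulA, lam_mul_rho, <- sb_mulA, lam_mul_rho, !sb_mulA.
    reflexivity. }
  assert (Hrhs : lam x p * lam (rho p x) q * rho q (rho p x) = x * (y * z)).
  { rewrite sb_mulA, lam_mul_rho, <- sb_mulA, lam_mul_rho, sb_mulA, Hpq. reflexivity. }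
  assert (Hmid : rho (lam (rho y x) z) (lam x y) = lam (rho p x) q).
  { apply (sb_mulrI (lam x p)). apply (sb_mulIr (rho z (rho y x))).
    rewrite Hlhs, Hlst, Hrhs. reflexivity. }
  rewrite Hfst, Hmid, Hlst. reflexivity.
Qed.

Section Solution.
Hypothesis Hsol : is_solution (assoc_map add mul inv).

Lemma solution_oneD_mul y z : one + y * (one + z) = one + lam y z * (one + rho z y).
Proof.
  specialize (Hsol (one, y, z)). cbv beta iota zeta delta [r12 r23 assoc_map fst snd] in Hsol.
  apply (f_equal snd) in Hsol. cbn [snd] in Hsol.
  rewrite !rho_rho, !sb_mul1r, lam_mul_rho in Hsol.
  apply sb_mulIr, sb_invr_inj in Hsol. rewrite !lam1 in Hsol. exact Hsol.
Qed.

Lemma oneD_inv_oneD_mul z : one + inv (one + z) * z = one.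
Proof.
  pose proof (solution_oneD_mul one z) as H.
  rewrite rho_lamE, !lam1, !sb_mul1r, oneD_idem, fixed_mul in H by apply oneD_idem.
  apply (sb_mulrI (one + z)). rewrite <- H, sb_mulr1. reflexivity.
Qed.

Lemma oneD1 : one + one = one.
Proof.
  pose proof (oneD_inv_oneD_mul one) as H. rewrite sb_mulr1 in H.
  transitivity (one + (one + inv (one + one))); [rewrite H; reflexivity |].
  rewrite oneD_idem. exact H.
Qed.

Lemma kernel_inv_of_lam b : one + b = one -> lam b (inv b) = one -> one + inv b = one.
Proof.
  intros Hb Hl.
  transitivity (lam (inv b * b) (inv b)); [rewrite sb_mulVr, lam1; reflexivity |].
  rewrite lam_mul, Hl.
  transitivity (lam (inv b) (lam b one)).
  - rewrite (kernel_lam b one Hb), oneD1, sb_mulr1, Hb. reflexivity.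
  - rewrite <- lam_mul, sb_mulVr, lam1. exact oneD1.
Qed.

Lemma fixed_inv e : one + e = e -> one + inv e = inv e.
Proof.
  intro He.
  set (f := one + inv e).
  set (b := inv f * inv e).
  assert (Hb : one + b = one) by apply oneD_inv_oneD_mul.
  assert (Hbinv : one + inv b = inv b).
  { unfold b. rewrite sb_invrM, !sb_invrK. apply fixed_mul; [exact He | apply oneD_idem]. }
  assert (Hl : lam b (inv b) = one).
  { rewrite (kernel_lam b (inv b) Hb), Hbinv, sb_mulrV. exact oneD1. }
  assert (Hb1 : b = one).
  { apply sb_invr_inj. rewrite sb_invr1, <- Hbinv. exact (kernel_inv_of_lam b Hb Hl). }
  symmetry. rewrite (sb_inv_eq _ _ Hb1), sb_invrK. reflexivity.
Qed.

Lemma kernel_mul b b' : one + b = one -> one + b' = one -> one + b * b' = one.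
Proof.
  intros Hb Hb'.
  pose proof (solution_oneD_mul b b') as H.
  assert (Hl : lam b b' = one).
  { rewrite (kernel_lam b b' Hb), Hb', sb_mulr1. exact Hb. }
  rewrite rho_lamE, Hl, Hb', sb_mulr1, Hb, sb_invr1, !sb_mul1r, oneD_idem in H.
  symmetry. exact H.
Qed.

Lemma kernel_inv b : one + b = one -> one + inv b = one.
Proof.
  intro Hb. apply (kernel_inv_of_lam b Hb).
  pose proof (solution_oneD_mul b (inv b)) as H.
  rewrite <- (kernel_lam b (inv b) Hb), rho_lamE, sb_mulrV, sb_mulr1 in H.
  rewrite fixed_inv, sb_mulrV, oneD1 in H by apply oneD_lam.
  exact H.
Qed.

Lemma oneD_fixed_mul_kernel e b : one + e = e -> one + b = one -> one + e * b = e.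
Proof.
  intros He Hb.
  set (f := one + e * b).
  set (b' := inv f * (e * b)).
  assert (Hb' : one + b' = one) by apply oneD_inv_oneD_mul.
  assert (Hg : inv e * f = b * inv b').
  { unfold b'. rewrite sb_invrM, sb_invrK, sb_invrM, <- !sb_mulA, sb_mulrV, sb_mul1r.
    reflexivity. }
  (* inv e * f lies in both subgroups E and K, hence equals one. *)
  assert (HgE : one + inv e * f = inv e * f).
  { apply fixed_mul; [apply fixed_inv; exact He | apply oneD_idem]. }
  assert (HgK : one + inv e * f = one).
  { rewrite Hg. apply kernel_mul; [exact Hb | apply kernel_inv; exact Hb']. }
  rewrite HgK in HgE. symmetry in HgE.
  apply sb_inv_eq in HgE. rewrite sb_invrK in HgE. exact HgE.
Qed.

Lemma condition_of_solution : braid_condition add mul one.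
Proof.
  intros x z.
  set (e := one + z).
  set (b := inv e * z).
  assert (Hb : one + b = one) by apply oneD_inv_oneD_mul.
  set (f := one + x * e).
  set (c := inv f * (x * e)).
  assert (Hc : one + c = one) by apply oneD_inv_oneD_mul.
  assert (Hxz : x * z = f * (c * b)).
  { unfold c, b. rewrite <- !sb_mulA, sb_mulrV, sb_mul1r, (sb_mulA x), sb_mulrV, sb_mulr1.
    reflexivity. }
  rewrite Hxz, oneD_fixed_mul_kernel;
    [reflexivity | apply oneD_idem | apply kernel_mul; assumption].
Qed.

Lemma fixed_idem_add k : one + k = k -> k + k = k -> forall x, k + x = one + x.
Proof.
  intros Hk Hkk x.
  set (k' := inv k * (one + x)).
  assert (Hk' : one + k' = k') by (apply fixed_mul; [apply fixed_inv; exact Hk | apply oneD_idem]).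
  assert (Hy : k + lam k k' = one + x).
  { rewrite add_lamE, <- lam_mul, sb_mulVr, lam1, Hk'. unfold k'.
    rewrite <- sb_mulA, sb_mulrV, sb_mul1r. reflexivity. }
  rewrite (sb_add_oneD k x), <- Hy, <- sb_addA, Hkk. reflexivity.
Qed.

Lemma oneD_idem_add t : t + t = t -> forall x, (one + t) + x = one + x.
Proof.
  intro Ht. apply fixed_idem_add; [apply oneD_idem |].
  rewrite sb_addA, <- sb_add_oneD, Ht. reflexivity.
Qed.

End Solution.

Lemma solution_iff_braid_condition :
  is_solution (assoc_map add mul inv) <-> braid_condition add mul one.
Proof. split; [apply condition_of_solution | apply braid_of_condition]. Qed.

End LeftSemibrace.

Section AsymmetricProduct.

Context {S T : Type}
  {addS mulS : S -> S -> S} {oneS : S} {invS : S -> S}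
  {addT mulT : T -> T -> T} {oneT : T} {invT : T -> T}
  {sigma : T -> S -> S} {delta : S -> T -> T} {bb : S -> S -> T}.
Hypothesis HS : is_left_semibrace addS mulS oneS invS.
Hypothesis HT : is_left_semibrace addT mulT oneT invT.
Hypothesis Hsig_aut : forall u, is_automorphism addS mulS (sigma u).
Hypothesis Hsig_hom : forall u v a, sigma (mulT u v) a = sigma u (sigma v a).
Hypothesis Hdelta_end : forall a u v, delta a (addT u v) = addT (delta a u) (delta a v).

Local Notation addB := (ap_add addS addT delta bb).
Local Notation mulB := (ap_mul mulS mulT sigma).
Local Notation invB := (ap_inv invS invT sigma).

Lemma sigma_add u a b : sigma u (addS a b) = addS (sigma u a) (sigma u b).
Proof. apply (Hsig_aut u). Qed.
Lemma sigma_mul u a b : sigma u (mulS a b) = mulS (sigma u a) (sigma u b).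
Proof. apply (Hsig_aut u). Qed.

Lemma sigma1 u : sigma u oneS = oneS.
Proof.
  apply (sb_mulrI HS (sigma u oneS)).
  rewrite <- sigma_mul, !(sb_mulr1 HS). reflexivity.
Qed.

Lemma sigma_oneT a : sigma oneT a = a.
Proof.
  destruct (Hsig_aut oneT) as [[g [Hg _]] _].
  rewrite <- (Hg (sigma oneT a)), <- Hsig_hom, (sb_mul1r HT). apply Hg.
Qed.

Lemma sigma_invTK u a : sigma u (sigma (invT u) a) = a.
Proof. rewrite <- Hsig_hom, (sb_mulrV HT). apply sigma_oneT. Qed.

Section Semibrace.
Hypothesis Hcoc : is_delta_cocycle addS addT delta bb.
Hypothesis Hcompat : forall (a b c : S) (u v : T),
  let l := sb_lambda addS mulS invS a (sigma u c) in
  addT (addT (bb (mulS a (sigma u b)) l) (delta l (mulT u v)))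
       (mulT u (addT (bb (sigma (invT u) (invS a)) c) (delta c (invT u))))
  = mulT u (addT (bb b c) (delta c v)).

Lemma ap_addA x y z : addB (addB x y) z = addB x (addB y z).
Proof.
  destruct x as [a u], y as [b v], z as [c w]. unfold ap_add; cbn [fst snd].
  f_equal; [apply (sb_addA HS) |].
  pose proof (f_equal (fun t => addT t w) (Hcoc a b c u v)) as H. cbn beta in H.
  rewrite !Hdelta_end, !(sb_addA HT). rewrite !(sb_addA HT) in H. exact H.
Qed.

Lemma ap_group : is_group mulB (oneS, oneT) invB.
Proof.
  unfold ap_mul, ap_inv.
  split; [| split; [| split; [| split]]]; cbn [fst snd].
  - intros [a u] [b v] [c w]. cbn [fst snd].
    rewrite (sb_mulA HS), (sb_mulA HT), sigma_mul, Hsig_hom. reflexivity.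
  - intros [a u]. rewrite sigma_oneT, (sb_mul1r HS), (sb_mul1r HT). reflexivity.
  - intros [a u]. rewrite sigma1, (sb_mulr1 HS), (sb_mulr1 HT). reflexivity.
  - intros [a u]. cbn [fst snd].
    rewrite <- sigma_mul, (sb_mulVr HS), sigma1, (sb_mulVr HT). reflexivity.
  - intros [a u]. cbn [fst snd].
    rewrite sigma_invTK, (sb_mulrV HS), (sb_mulrV HT). reflexivity.
Qed.

Lemma ap_mul_add x y z : mulB x (addB y z) = addB (mulB x y) (mulB x (addB (invB x) z)).
Proof.
  destruct x as [a u], y as [b v], z as [c w]. unfold ap_mul, ap_add, ap_inv; cbn [fst snd].
  rewrite (sigma_add u (sigma (invT u) (invS a))), sigma_invTK.
  fold (sb_lambda addS mulS invS a (sigma u c)).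
  f_equal.
  - rewrite sigma_add, (sb_mul_add HS). reflexivity.
  - pose proof (Hcompat a b c u v) as H. cbv zeta in H.
    rewrite (sb_mul_add HT u (addT (bb b c) (delta c v)) w), <- H,
      (sb_mul_add HT u (addT (bb (sigma (invT u) (invS a)) c) (delta c (invT u))) w),
      !(sb_addA HT).
    reflexivity.
Qed.

Lemma ap_semibrace : is_left_semibrace addB mulB (oneS, oneT) invB.
Proof. split; [exact ap_addA | split; [exact ap_group | exact ap_mul_add]]. Qed.

End Semibrace.

Lemma ap_braid_condition :
  is_solution (assoc_map addS mulS invS) -> is_solution (assoc_map addT mulT invT) ->
  (forall a u, addT (bb oneS a) u = addT oneT u) ->
  braid_condition addB mulB (oneS, oneT).
Proof.
  intros HrS HrT Hbb1.
  assert (Hidem : forall c, addT (delta c oneT) (delta c oneT) = delta c oneT).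
  { intro c. rewrite <- Hdelta_end, (oneD1 HT HrT). reflexivity. }
  intros [a u] [c w]. unfold ap_mul, ap_add; cbn [fst snd].
  rewrite !Hbb1, !(oneD_idem_add HT HrT) by apply Hidem.
  f_equal.
  - rewrite sigma_add, sigma1. apply (condition_of_solution HS HrS).
  - apply (condition_of_solution HT HrT).
Qed.

End AsymmetricProduct.

Theorem theorem55 (S T : Type)
  (addS mulS : S -> S -> S) (oneS : S) (invS : S -> S)
  (addT mulT : T -> T -> T) (oneT : T) (invT : T -> T)
  (HS : is_left_semibrace addS mulS oneS invS)
  (HT : is_left_semibrace addT mulT oneT invT)
  (HrS : is_solution (assoc_map addS mulS invS))
  (HrT : is_solution (assoc_map addT mulT invT))
  (sigma : T -> S -> S)
  (Hsig_aut : forall u, is_automorphism addS mulS (sigma u))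
  (Hsig_hom : forall u v a, sigma (mulT u v) a = sigma u (sigma v a))
  (delta : S -> T -> T)
  (Hdelta_end : forall a u v, delta a (addT u v) = addT (delta a u) (delta a v))
  (bb : S -> S -> T)
  (Hcoc : is_delta_cocycle addS addT delta bb)
  (Hcompat : forall (a b c : S) (u v : T),
     let l := sb_lambda addS mulS invS a (sigma u c) in
     addT (addT (bb (mulS a (sigma u b)) l) (delta l (mulT u v)))
          (mulT u (addT (bb (sigma (invT u) (invS a)) c) (delta c (invT u))))
     = mulT u (addT (bb b c) (delta c v)))
  (H1 : forall (a : S) (u : T), delta a (delta oneS u) = delta a u)
  (H2 : forall (a : S) (u : T), addT (bb oneS a) u = addT oneT u)
  (H3 : forall a b : S, bb a (addS oneS b) = bb a b) :
  is_solution
    (assoc_map (ap_add addS addT delta bb) (ap_mul mulS mulT sigma)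
               (ap_inv invS invT sigma)).
Proof.
  apply (solution_iff_braid_condition
           (ap_semibrace HS HT Hsig_aut Hsig_hom Hdelta_end Hcoc Hcompat)).
  exact (ap_braid_condition HS HT Hsig_aut Hdelta_end HrS HrT H2).
Qed.
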